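(* For every $\lambda$ in $$\Omega=\{\lambda\in\mathbb D:\ \mathrm{Re}(\lambda)\ge0,\ \mathrm{Im}(\lambda)\ge0\}\setminus B_{\sqrt3/2}(1/2)=\{\lambda\in\mathbb D:\ 0\le\mathrm{Re}(\lambda)\le|\lambda|^2-\tfrac12\},$$ the set $A_\lambda$ has non-empty interior.
   Context: $\mathbb D$ is the open unit disc; $B_r(z_0)$ is the open disc of radius $r$ centered at $z_0$. $A_\lambda=\{\sum_{n\ge0}a_n\lambda^n:a_n\in\{-1,1\}\}$, the attractor of the iterated function system $\{\lambda z-1,\lambda z+1\}$. *)

From Stdlib Require Import Reals.
From Coquelicot Require Import Coquelicot.
Open Scope R_scope.

Definition A_lambda (lam : C) : C -> Prop :=
  fun z => exists a : nat -> R,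
    (forall n, a n = 1 \/ a n = -1) /\
    is_series (fun n => Cmult (RtoC (a n)) (Cpow lam n)) z.

Definition open_disc (z0 : C) (r : R) : C -> Prop :=
  fun z => Cmod (Cminus z z0) < r.

Definition Omega : C -> Prop :=
  fun lam => open_disc (RtoC 0) 1 lam /\ 0 <= Re lam /\ 0 <= Im lam /\
             ~ open_disc (RtoC (1/2)) (sqrt 3 / 2) lam.

Definition has_nonempty_interior (S : C -> Prop) : Prop :=
  exists z0 : C, exists r : R, 0 < r /\ forall z, open_disc z0 r z -> S z.

From Stdlib Require Import Reals Lra Psatz Classical ClassicalEpsilon.
From Coquelicot Require Import Coquelicot.
Open Scope R_scope.

(* Write lam = a + i b and use real coordinates in the basis (1, lam).  The
   parallelogram K = { x + y lam : |x| <= 2, |y| <= 1/|lam|^2 } is covered by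
   (1 + lam K) u (-1 + lam K) as soon as 1 + 2|a| <= 2|lam|^2, which is the
   inequality defining Omega.  Iterating the cover from z in K yields digits
   a_n in {1, -1} and points w_n in K with
   z = sum_(k <= n) a_k lam^k + lam^(n+1) w_(n+1); since K is bounded and
   |lam| < 1 the remainder vanishes, so K lies in A_lam.  Finally K contains
   the disc of radius |b|/2 around 0. *)

Section DigitExpansion.

Variables (lam : C) (a : nat -> R) (w : nat -> C).
Hypothesis w_step : forall n, w n = Cplus (RtoC (a n)) (Cmult lam (w (S n))).

Lemma sum_digits_remainder (n : nat) :
  Cplus (sum_n (fun k => Cmult (RtoC (a k)) (Cpow lam k)) n)
        (Cmult (Cpow lam (S n)) (w (S n))) = w O.
Proof.
induction n as [|n IHn].
- rewrite sum_O, (w_step 0); simpl; ring.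
- rewrite sum_Sn, <- IHn, (w_step (S n)).
  change (plus ?x ?y) with (Cplus x y); simpl; ring.
Qed.

Lemma is_series_digits (M : R) :
  Cmod lam < 1 -> (forall n, Cmod (w n) <= M) ->
  is_series (fun k => Cmult (RtoC (a k)) (Cpow lam k)) (w O).
Proof.
intros lam_lt1 w_bounded.
assert (remainder_lim : is_lim_seq (fun n => M * Cmod lam ^ S n) 0).
{ rewrite <- (Rmult_0_r M).
  apply (is_lim_seq_scal_l _ M 0), (is_lim_seq_incr_1 (fun n => Cmod lam ^ n)).
  apply is_lim_seq_geom; rewrite Rabs_pos_eq by apply Cmod_ge_0; exact lam_lt1. }
apply filterlim_locally_ball_norm; intro eps.
apply is_lim_seq_spec in remainder_lim.
destruct (remainder_lim eps) as [N HN].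
exists N; intros n Hn.
unfold ball_norm; change (norm (minus ?x ?y)) with (Cmod (Cminus x y)).
set (S_n := sum_n (fun k => Cmult (RtoC (a k)) (Cpow lam k)) n).
rewrite <- (sum_digits_remainder n); fold S_n.
replace (Cminus S_n _) with (Copp (Cmult (Cpow lam (S n)) (w (S n)))) by ring.
rewrite Cmod_opp, Cmod_mult, Cmod_pow.
apply Rle_lt_trans with (M * Cmod lam ^ S n).
- rewrite (Rmult_comm M); apply Rmult_le_compat_l; [apply pow_le, Cmod_ge_0 | apply w_bounded].
- specialize (HN n Hn); rewrite Rminus_0_r in HN.
  exact (Rle_lt_trans _ _ _ (Rle_abs _) HN).
Qed.

End DigitExpansion.

Section SelfCover.

Variables (lam : C) (K : C -> Prop).
Hypothesis K_self_cover : forall z, K z ->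
  exists s w, (s = 1 \/ s = -1) /\ K w /\ z = Cplus (RtoC s) (Cmult lam w).

Lemma self_cover_orbit (z : C) : K z ->
  exists (a : nat -> R) (w : nat -> C), w O = z /\
    forall n, (a n = 1 \/ a n = -1) /\ K (w n) /\
              w n = Cplus (RtoC (a n)) (Cmult lam (w (S n))).
Proof.
intro Kz.
assert (step : forall u, {p : R * C | K u ->
  (fst p = 1 \/ fst p = -1) /\ K (snd p) /\ u = Cplus (RtoC (fst p)) (Cmult lam (snd p))}).
{ intro u; apply constructive_indefinite_description.
  destruct (classic (K u)) as [Ku | notKu].
  - destruct (K_self_cover u Ku) as (s & v & Hs & Kv & Hu).
    exists (s, v); auto.
  - exists (1, RtoC 0); tauto. }
set (w := fix w n := match n with O => z | S n => snd (proj1_sig (step (w n))) end).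
exists (fun n => fst (proj1_sig (step (w n)))), w; split; [reflexivity |].
assert (Kw : forall n, K (w n)).
{ induction n as [|n IHn]; [exact Kz |].
  simpl; destruct (step (w n)) as [p Hp]; apply Hp, IHn. }
intro n; split; [| split; [apply Kw |]];
  simpl; destruct (step (w n)) as [p Hp]; apply Hp, Kw.
Qed.

Lemma self_cover_subset_A_lambda (M : R) :
  Cmod lam < 1 -> (forall z, K z -> Cmod z <= M) ->
  forall z, K z -> A_lambda lam z.
Proof.
intros lam_lt1 K_bounded z Kz.
destruct (self_cover_orbit z Kz) as (a & w & <- & Hw).
exists a; split; [intro n; apply Hw |].
apply (is_series_digits lam a w (fun n => proj2 (proj2 (Hw n))) M lam_lt1).
intro n; apply K_bounded, Hw.
Qed.

End SelfCover.

Definition parallelogram (lam : C) (p q : R) : C -> Prop :=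
  fun z => exists x y : R, Rabs x <= p /\ Rabs y <= q /\
    z = Cplus (RtoC x) (Cmult (RtoC y) lam).

Lemma Cmod_parallelogram_le (lam : C) (p q : R) (z : C) :
  parallelogram lam p q z -> Cmod z <= p + q * Cmod lam.
Proof.
intros (x & y & Hx & Hy & ->).
eapply Rle_trans; [apply Cmod_triangle |].
rewrite Cmod_mult, !Cmod_R.
apply Rplus_le_compat; [exact Hx |].
apply Rmult_le_compat_r; [apply Cmod_ge_0 | exact Hy].
Qed.

(* lam^2 = 2 Re lam * lam - |lam|^2, so multiplication by lam acts on
   coordinates in the basis (1, lam) as (x, y) |-> (-|lam|^2 y, x + 2 Re lam y). *)
Lemma lam_mul_lincomb (lam : C) (x y : R) :
  Cmult lam (Cplus (RtoC x) (Cmult (RtoC y) lam)) =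
  Cplus (RtoC (- (Cmod lam ^ 2 * y))) (Cmult (RtoC (x + 2 * Re lam * y)) lam).
Proof.
rewrite Cmod2_alt; destruct lam as [a b].
unfold Cmult, Cplus, RtoC, Re, Im; simpl; f_equal; ring.
Qed.

Lemma digit_near (x : R) : Rabs x <= 2 ->
  exists s, (s = 1 \/ s = -1) /\ Rabs (s - x) <= 1.
Proof.
intro Hx; apply Rabs_le_between in Hx.
destruct (Rle_lt_dec 0 x).
- exists 1; split; [now left | apply Rabs_le; lra].
- exists (-1); split; [now right | apply Rabs_le; lra].
Qed.

Lemma parallelogram_self_cover (lam : C) :
  1 + 2 * Rabs (Re lam) <= 2 * Cmod lam ^ 2 ->
  forall z, parallelogram lam 2 (/ Cmod lam ^ 2) z ->
  exists s w, (s = 1 \/ s = -1) /\ parallelogram lam 2 (/ Cmod lam ^ 2) w /\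
              z = Cplus (RtoC s) (Cmult lam w).
Proof.
intros Hlam z (x & y & Hx & Hy & ->).
set (r2 := Cmod lam ^ 2) in *.
assert (r2_pos : 0 < r2) by (pose proof (Rabs_pos (Re lam)); lra).
assert (c_pos : 0 < / r2) by now apply Rinv_0_lt_compat.
destruct (digit_near x Hx) as (s & Hs & Hsx).
set (y' := (s - x) / r2).
set (x' := y - 2 * Re lam * y').
assert (Hy' : Rabs y' <= / r2).
{ unfold y', Rdiv; rewrite Rabs_mult, (Rabs_pos_eq (/ r2)) by lra.
  rewrite <- (Rmult_1_l (/ r2)) at 2; apply Rmult_le_compat_r; lra. }
assert (Hx' : Rabs x' <= 2).
{ unfold x'; eapply Rle_trans; [apply Rabs_triang |]; rewrite Rabs_Ropp, !Rabs_mult.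
  rewrite (Rabs_pos_eq 2) by lra.
  assert (Rabs (Re lam) * Rabs y' <= Rabs (Re lam) * / r2)
    by (apply Rmult_le_compat_l; [apply Rabs_pos | exact Hy']).
  assert (/ r2 * (1 + 2 * Rabs (Re lam)) <= 2).
  { apply (Rmult_le_reg_l r2); [exact r2_pos |].
    rewrite <- Rmult_assoc, Rinv_r by lra; lra. }
  nra. }
exists s, (Cplus (RtoC x') (Cmult (RtoC y') lam)); split; [exact Hs | split].
- exists x', y'; auto.
- rewrite lam_mul_lincomb; fold r2.
  replace (x' + 2 * Re lam * y') with y by (unfold x'; ring).
  replace (- (r2 * y')) with (x - s) by (unfold y'; field; lra).
  rewrite RtoC_minus; ring.
Qed.

Lemma Rabs_Im_le_Cmod (z : C) : Rabs (Im z) <= Cmod z.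
Proof. exact (Rle_trans _ _ _ (Rmax_r _ _) (Rmax_Cmod z)). Qed.

Lemma disc_subset_parallelogram (lam : C) (p q : R) :
  Cmod lam < 1 -> 1 <= p -> 1 / 2 <= q ->
  forall z, open_disc (RtoC 0) (Rabs (Im lam) / 2) z -> parallelogram lam p q z.
Proof.
intros lam_lt1 Hp Hq z Hz; unfold open_disc in Hz.
replace (Cminus z (RtoC 0)) with z in Hz by ring.
pose proof (re_le_Cmod z) as Hre; pose proof (Rabs_Im_le_Cmod z) as Him.
pose proof (re_le_Cmod lam); pose proof (Rabs_Im_le_Cmod lam).
assert (b_pos : 0 < Rabs (Im lam)) by (pose proof (Cmod_ge_0 z); lra).
assert (b_ne0 : Im lam <> 0) by (intro E; rewrite E, Rabs_R0 in b_pos; lra).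
set (y := Im z / Im lam).
assert (Hy : Rabs y <= 1 / 2).
{ unfold y, Rdiv; rewrite Rabs_mult, Rabs_inv.
  apply (Rmult_le_reg_r (Rabs (Im lam))); [exact b_pos |].
  rewrite Rmult_assoc, Rinv_l by lra; lra. }
exists (Re z - Re lam * y), y; split; [| split; [lra |]].
- eapply Rle_trans; [apply Rabs_triang |]; rewrite Rabs_Ropp, Rabs_mult.
  assert (Rabs (Re lam) * Rabs y <= 1 * (1 / 2))
    by (apply Rmult_le_compat; try apply Rabs_pos; lra).
  lra.
- destruct z as [zr zi]; destruct lam as [a b].
  unfold y, Cplus, Cmult, RtoC, Re, Im in *; simpl in *.
  f_equal; field; exact b_ne0.
Qed.

Lemma Omega_spec (lam : C) : Omega lam ->
  Cmod lam < 1 /\ Im lam <> 0 /\ 1 + 2 * Rabs (Re lam) <= 2 * Cmod lam ^ 2.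
Proof.
intros (in_disc & Hre & Him & off_disc); unfold open_disc in in_disc, off_disc.
replace (Cminus lam (RtoC 0)) with lam in in_disc by ring.
apply Rnot_lt_le in off_disc.
pose proof (Cmod_ge_0 lam).
assert (far_from_half : 3 / 4 <= Cmod (Cminus lam (RtoC (1 / 2))) ^ 2).
{ replace (3 / 4) with ((sqrt 3 / 2) ^ 2)
    by (unfold Rdiv; rewrite Rpow_mult_distr, pow2_sqrt by lra; field).
  apply pow_incr; split; [apply Rdiv_le_0_compat; [apply sqrt_pos | lra] | exact off_disc]. }
assert (Re lam ^ 2 + Im lam ^ 2 < 1) by (rewrite <- Cmod2_alt; nra).
rewrite Cmod2_alt in far_from_half |- *.
destruct lam as [a b]; simpl in *.
rewrite Rabs_pos_eq by exact Hre.
split; [exact in_disc | split; [intro; subst b | ]; nra].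
Qed.

Theorem mainTheorem11 : forall lam : C, Omega lam -> has_nonempty_interior (A_lambda lam).
Proof.
intros lam HOmega.
destruct (Omega_spec lam HOmega) as (lam_lt1 & Im_ne0 & lam_large).
set (K := parallelogram lam 2 (/ Cmod lam ^ 2)).
assert (K_in_A : forall z, K z -> A_lambda lam z).
{ apply (self_cover_subset_A_lambda lam K (parallelogram_self_cover lam lam_large)
           (2 + / Cmod lam ^ 2 * Cmod lam) lam_lt1).
  apply Cmod_parallelogram_le. }
assert (half_le_c : 1 / 2 <= / Cmod lam ^ 2).
{ pose proof (Rabs_pos (Re lam)).
  apply Rmult_le_reg_l with (Cmod lam ^ 2); [lra |].
  rewrite Rinv_r by lra; pose proof (pow_incr _ _ 2 (conj (Cmod_ge_0 lam) (Rlt_le _ _ lam_lt1))).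
  rewrite pow1 in *; lra. }
exists (RtoC 0), (Rabs (Im lam) / 2); split.
- pose proof (Rabs_pos_lt _ Im_ne0); lra.
- intros z Hz; apply K_in_A, disc_subset_parallelogram;
    [exact lam_lt1 | lra | exact half_le_c | exact Hz].
Qed.
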